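(* Let $\alpha\in(0,1]$ and let $G$ be a planar 3-tree with $n$ vertices. Then the tree $T(G)$ has at most $2n^{1-\alpha}$ hubs.
   Context: A planar 3-tree $G$ is constructed by starting from a triangle and repeatedly inserting a new vertex $u$ into a triangular face $\Delta=v_1v_2v_3$ of the current plane graph, joining $u$ to $v_1,v_2,v_3$. This process is encoded by a rooted tree $T=T(G)$: its nodes are triangles of $G$, its root is the initial triangle, and when $u$ is inserted into the face $\Delta=v_1v_2v_3$ (which is currently a leaf of $T$), the node $\Delta$ receives three children, the triangles $v_1v_2u$, $v_1uv_3$ and $uv_2v_3$. For a node $\Delta$ of $T$, let $V_\Delta$ be the set of vertices of $G$ lying in the interior of $\Delta$ (equivalently, the vertices inserted at nodes of the subtree rooted at $\Delta$), and $\mathrm{weight}(\Delta)=|V_\Delta|$. A node is heavy if its weight is at least $n^\alpha$. Hubs are defined top-down: the root of $T$ is a hub, and a non-root node $\Delta$ is a hub if $n^\alpha\le \mathrm{weight}(\Delta)\le \mathrm{weight}(\Delta')-n^\alpha$ for every hub $\Delta'$ that is an ancestor of $\Delta$. *)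

From Stdlib Require Import Reals List.
Open Scope R_scope.

(* The construction tree T(G) of a planar 3-tree G.  A node is a triangle of G;
   a leaf is a triangle that never received a vertex (a face of G), and an
   internal node [Node t1 t2 t3] is a triangle v1v2v3 into which a vertex u was
   inserted, its three children being the subtrees of v1v2u, v1uv3, uv2v3. *)
Inductive ctree : Type :=
| Leaf : ctree
| Node : ctree -> ctree -> ctree -> ctree.

(* weight(Δ) = |V_Δ| = number of vertices inserted at nodes of the subtree. *)
Fixpoint weight (t : ctree) : nat :=
  match t with
  | Leaf => 0
  | Node a b c => S (weight a + weight b + weight c)
  end.

(* number of vertices of G: the 3 initial ones plus the inserted ones *)
Definition nverts (t : ctree) : nat := 3 + weight t.

Definition thr (alpha : R) (n : nat) : R := Rpower (INR n) alpha.

Definition Rleb (x y : R) : bool := if Rle_dec x y then true else false.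

Definition is_hub (na : R) (w : nat) (ws : list nat) : bool :=
  Rleb na (INR w) && forallb (fun w' => Rleb (INR w) (INR w' - na)) ws.

(* number of hubs in a (non-root) subtree, given the weights ws of the hub
   ancestors of its root *)
Fixpoint hubs_below (na : R) (ws : list nat) (t : ctree) : nat :=
  let h := is_hub na (weight t) ws in
  let ws' := if h then weight t :: ws else ws in
  (if h then 1 else 0)%nat +
  match t with
  | Leaf => 0
  | Node a b c => hubs_below na ws' a + hubs_below na ws' b + hubs_below na ws' c
  end.

(* number of hubs of T; the root is always a hub *)
Definition num_hubs (alpha : R) (t : ctree) : nat :=
  let na := thr alpha (nverts t) in
  match t with
  | Leaf => 1
  | Node a b c =>
      1 + hubs_below na (weight t :: nil) a + hubs_below na (weight t :: nil) b
        + hubs_below na (weight t :: nil) c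
  end%nat.

From Stdlib Require Import Reals List Lra Lia.
Open Scope R_scope.

(* Write [a = n^alpha].  Summarize the hubs strictly inside a subtree by the
   number [k] of its maximal hubs and their total weight [u]: then the number
   [g] of hubs satisfies [a g <= 2u - a k].  A hub of weight [w] whose maximal
   sub-hubs have total weight [u <= w] satisfies the same bound with [k = 1]:
   if it has no sub-hub this is [a <= w]; if it has exactly one, that sub-hub
   weighs at most [w - a] by the hub condition; if it has at least two, the
   [- a k] pays for the hub itself.  At the root [w <= n], so there are at
   most [2n/a = 2 n^(1-alpha)] hubs. *)

Record hub_profile (a cap : R) (hubs maximal mass size : nat) : Prop := {
  hubs_le_mass : a * INR hubs <= 2 * INR mass - a * INR maximal;
  mass_le_size : (mass <= size)%nat;
  mass_no_maximal : maximal = 0%nat -> mass = 0%nat;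
  mass_one_maximal : maximal = 1%nat -> INR mass <= cap }.

Section HubProfile.

Variable a : R.
Hypothesis a_pos : 0 < a.

Lemma hub_profile0 cap : hub_profile a cap 0 0 0 0.
Proof. split; simpl; try lia; lra. Qed.

Lemma hub_profile_add cap g1 k1 u1 s1 g2 k2 u2 s2 :
  hub_profile a cap g1 k1 u1 s1 -> hub_profile a cap g2 k2 u2 s2 ->
  hub_profile a cap (g1 + g2) (k1 + k2) (u1 + u2) (s1 + s2).
Proof.
  intros [G1 S1 Z1 O1] [G2 S2 Z2 O2].
  split; [rewrite !plus_INR; lra | lia | intros E; rewrite Z1, Z2; lia |].
  intros E. destruct k1 as [|[|k1]]; [| |lia].
  - rewrite (Z1 eq_refl); apply O2; lia.
  - rewrite (Z2 ltac:(lia)), Nat.add_0_r; apply O1; reflexivity.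
Qed.

Lemma hub_profile_add3 cap g1 k1 u1 s1 g2 k2 u2 s2 g3 k3 u3 s3 :
  hub_profile a cap g1 k1 u1 s1 -> hub_profile a cap g2 k2 u2 s2 ->
  hub_profile a cap g3 k3 u3 s3 ->
  hub_profile a cap (g1 + g2 + g3) (k1 + k2 + k3) (u1 + u2 + u3) (s1 + s2 + s3).
Proof. intros P1 P2 P3; apply hub_profile_add; [apply hub_profile_add|]; assumption. Qed.

Lemma hub_profile_close w g k u s :
  (s <= w)%nat -> hub_profile a (INR w - a) g k u s ->
  a * (1 + INR g) <= Rmax a (2 * INR w - a).
Proof.
  intros Hsw [G Hus Z O].
  assert (Huw : INR u <= INR w) by (apply le_INR; lia).
  pose proof (Rmult_le_pos a (INR g) ltac:(lra) (pos_INR g)).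
  destruct k as [|[|k]].
  - rewrite (Z eq_refl) in G. simpl in G.
    apply Rle_trans with a; [lra|apply Rmax_l].
  - apply Rle_trans with (2 * INR w - a); [|apply Rmax_r].
    specialize (O eq_refl). simpl in G. lra.
  - apply Rle_trans with (2 * INR w - a); [|apply Rmax_r].
    assert (Hk : 2 <= INR (S (S k))) by (rewrite !S_INR; pose proof (pos_INR k); lra).
    nra.
Qed.

End HubProfile.

Lemma is_hub_bounds a w w0 rest :
  is_hub a w (w0 :: rest) = true -> a <= INR w <= INR w0 - a.
Proof.
  unfold is_hub, Rleb. cbn [forallb].
  destruct (Rle_dec a (INR w)), (Rle_dec (INR w) (INR w0 - a)); simpl;
    try discriminate; auto.
Qed.

Lemma hubs_below_profile a (a_pos : 0 < a) (t : ctree) :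
  forall w0 rest, exists k u,
    hub_profile a (INR w0 - a) (hubs_below a (w0 :: rest) t) k u (weight t).
Proof.
  induction t as [|t1 IH1 t2 IH2 t3 IH3]; intros w0 rest.
  - exists 0%nat, 0%nat. cbn [hubs_below weight].
    destruct (is_hub a 0 (w0 :: rest)) eqn:H.
    + apply is_hub_bounds in H. simpl in H. lra.
    + apply hub_profile0.
  - cbn [hubs_below]. set (w := weight (Node t1 t2 t3)).
    assert (Hsize : (weight t1 + weight t2 + weight t3 <= w)%nat)
      by (unfold w; simpl; lia).
    destruct (is_hub a w (w0 :: rest)) eqn:H.
    + apply is_hub_bounds in H.
      destruct (IH1 w (w0 :: rest)) as [k1 [u1 P1]].
      destruct (IH2 w (w0 :: rest)) as [k2 [u2 P2]].
      destruct (IH3 w (w0 :: rest)) as [k3 [u3 P3]].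
      pose proof (hub_profile_close a a_pos w _ _ _ _ Hsize
                    (hub_profile_add3 a _ _ _ _ _ _ _ _ _ _ _ _ _ P1 P2 P3)) as Hclose.
      rewrite Rmax_right in Hclose by lra.
      exists 1%nat, w. split; [|lia|lia|intros _; lra].
      rewrite plus_INR. change (INR 1) with 1. lra.
    + destruct (IH1 w0 rest) as [k1 [u1 P1]].
      destruct (IH2 w0 rest) as [k2 [u2 P2]].
      destruct (IH3 w0 rest) as [k3 [u3 P3]].
      exists (k1 + k2 + k3)%nat, (u1 + u2 + u3)%nat.
      destruct (hub_profile_add3 a _ _ _ _ _ _ _ _ _ _ _ _ _ P1 P2 P3) as [G Hus Z O].
      split; auto; lia.
Qed.

Lemma Rpower_mul_Rpower_one_minus x e :
  0 < x -> Rpower x e * Rpower x (1 - e) = x.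
Proof.
  intros Hx. rewrite <- Rpower_plus.
  replace (e + (1 - e)) with 1 by ring. apply Rpower_1, Hx.
Qed.

Theorem lemma2 (alpha : R) (t : ctree) :
  0 < alpha <= 1 ->
  INR (num_hubs alpha t) <= 2 * Rpower (INR (nverts t)) (1 - alpha).
Proof.
  intros [alpha_pos alpha_le1].
  set (n := INR (nverts t)).
  set (a := Rpower n alpha).
  set (p := Rpower n (1 - alpha)).
  assert (Hn : INR (weight t) + 1 <= n)
    by (unfold n, nverts; rewrite plus_INR; simpl; lra).
  pose proof (pos_INR (weight t)).
  assert (a_pos : 0 < a) by (unfold a, Rpower; apply exp_pos).
  assert (Hp : 1 <= p) by (rewrite <- (Rpower_O n) by lra; apply Rle_Rpower; lra).
  assert (Hnap : a * p = n) by (apply Rpower_mul_Rpower_one_minus; lra).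
  apply Rmult_le_reg_l with a; [exact a_pos|].
  destruct t as [|t1 t2 t3]; [simpl; nra|].
  unfold num_hubs. change (thr alpha (nverts (Node t1 t2 t3))) with a.
  set (W := weight (Node t1 t2 t3)) in *.
  destruct (hubs_below_profile a a_pos t1 W nil) as [k1 [u1 P1]].
  destruct (hubs_below_profile a a_pos t2 W nil) as [k2 [u2 P2]].
  destruct (hubs_below_profile a a_pos t3 W nil) as [k3 [u3 P3]].
  assert (Hsize : (weight t1 + weight t2 + weight t3 <= W)%nat) by (unfold W; simpl; lia).
  pose proof (hub_profile_close a a_pos W _ _ _ _ Hsize
                (hub_profile_add3 a _ _ _ _ _ _ _ _ _ _ _ _ _ P1 P2 P3)) as Hclose.
  rewrite <- !Nat.add_assoc, plus_INR, Nat.add_assoc. change (INR 1) with 1.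
  apply Rle_trans with (1 := Hclose), Rmax_lub; nra.
Qed.
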